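(* Let $m\in\mathbb{N}$, let $\lambda_1<\dots<\lambda_m$ be real numbers and $\Lambda=\operatorname{diag}(\lambda_1,\dots,\lambda_m)$. Let $G$ be a tree with vertex set $[m]$. Let $g:E(G)\to\mathbb{N}$ be any function, let $N_0\in\mathbb{N}$ satisfy $N_0>\max\{g(e):e\in E(G)\}\cdot\operatorname{diam}(G)$, and define $f:E(G)\to\mathbb{N}$ by $f(e)=N_0+g(e)$. For $i,j\in V(G)$ let $P(i,j)$ be the (unique) path in $G$ from $i$ to $j$, and set $$c(i,j):=\prod_{k\in V(P(i,j))\setminus\{j\}}(\lambda_j-\lambda_k)^{-1},\qquad s(i,j):=\sum_{e\in E(P(i,j))}f(e),$$ so that $c(j,j)=1$, $s(j,j)=0$ and $c(i,j)\neq0$. Suppose $t_n>0$ with $t_n\to0$, and $A_n\in\mathcal M_{f,G}(t_n)\cap\mathcal E_\Lambda$ with $A_n\to\Lambda$ as $n\to\infty$. For each $n$ let $U_n=(u_n(i,j))$ be a real orthogonal matrix with nonnegative diagonal entries such that $U_n^\top A_nU_n=\Lambda$. Then for all $i,j\in V(G)$, $$\frac{u_n(i,j)}{t_n^{s(i,j)}}\to c(i,j)\quad\text{as }n\to\infty.$$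
   Context: For a simple graph $G$ on vertex set $[m]$, $S(G)$ is the set of real symmetric $m\times m$ matrices $A=(a(i,j))$ such that for $i\neq j$, $a(i,j)\neq0$ iff $\{i,j\}\in E(G)$; diagonal entries are unrestricted. For $f:E(G)\to\mathbb{N}$ and $t\in\mathbb{R}$, $\mathcal M_{f,G}(t):=\{A=(a(i,j))\in S(G): a(i,j)=t^{f(\{i,j\})}\text{ for }\{i,j\}\in E(G)\}$. $\mathcal E_\Lambda$ is the set of real symmetric $m\times m$ matrices with eigenvalues $\lambda_1,\dots,\lambda_m$. $\operatorname{diam}(G)$ is the diameter of $G$. *)

From HB Require Import structures.
From mathcomp Require Import all_boot all_order all_algebra.
From mathcomp Require Import all_classical all_reals all_analysis.
Set Implicit Arguments. Unset Strict Implicit. Unset Printing Implicit Defensive.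
Import Order.TTheory GRing.Theory Num.Theory.
Local Open Scope ring_scope.

Definition simple_graph (T : finType) (e : rel T) : Prop :=
  (forall x y, e x y = e y x) /\ (forall x, ~~ e x x).

Definition connected_graph (T : finType) (e : rel T) : Prop :=
  forall x y, connect e x y.
Definition acyclic_graph (T : finType) (e : rel T) : Prop :=
  forall c : seq T, (3 <= size c)%N -> uniq c -> ~~ cycle e c.
Definition is_tree (T : finType) (e : rel T) : Prop :=
  simple_graph e /\ connected_graph e /\ acyclic_graph e.

(* [p] describes a (simple) path from i to j: the vertex list is i :: p. *)
Definition is_gpath (T : finType) (e : rel T) (i j : T) (p : seq T) : bool :=
  [&& path e i p, last i p == j & uniq (i :: p)].

Fixpoint nball (T : finType) (e : rel T) (n : nat) (i : T) : {set T} :=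
  match n with
  | 0 => [set i]
  | n'.+1 => nball e n' i :|: [set y | [exists x in nball e n' i, e x y]]
  end.
Definition gdist (T : finType) (e : rel T) (i j : T) : nat :=
  find (fun n => j \in nball e n i) (iota 0 #|T|).
Definition diam (T : finType) (e : rel T) : nat :=
  \max_(i : T) \max_(j : T) gdist e i j.

(* Edge weights: a symmetric function w on pairs; only values on edges matter. *)
Definition max_on_edges (T : finType) (e : rel T) (w : T -> T -> nat) : nat :=
  \max_(i : T) \max_(j : T | e i j) w i j.

Definition path_weight (T : finType) (f : T -> T -> nat) (i : T) (p : seq T) : nat :=
  (\sum_(x <- zip (i :: p) p) f x.1 x.2)%N.

Definition path_coef (R : realType) (m : nat) (lam : 'I_m -> R) (i j : 'I_m)
  (p : seq 'I_m) : R :=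
  \prod_(k <- belast i p) (lam j - lam k)^-1.

Definition in_MfG (R : realType) (m : nat) (e : rel 'I_m) (f : 'I_m -> 'I_m -> nat)
  (t : R) (A : 'M[R]_m) : Prop :=
  A^T = A /\
  forall i j : 'I_m, i != j -> A i j = (if e i j then t ^+ f i j else 0).

(* E_Lambda: real symmetric matrices whose eigenvalues (with multiplicity)
   are lam_1, ..., lam_m, i.e. whose characteristic polynomial is
   prod_k (X - lam_k). *)
Definition in_E (R : realType) (m : nat) (lam : 'I_m -> R) (A : 'M[R]_m) : Prop :=
  A^T = A /\ char_poly A = \prod_(k < m) ('X - (lam k)%:P).

(* Fix the column [j] and root the tree at [j].  The eigenvalue equation
   [A_n v = lam_j v] for [v = U_n e_j], rescaled by [w_k = v_k / t^(s(k,j))],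
   reads at a vertex [a]:
     (lam_j - A_n(a,a)) w_a = w_(parent a) + sum_(children k) t^(2 f(a,k)) w_k.
   Since [A_n(a,a) -> lam_a] and the [lam]'s are distinct, a discrete maximum
   principle for [|w_k| / K^(depth k)] bounds [w] for small [t].  Hence
   [v_k = O(t)] off the root, so the unit column [v] with [v_j >= 0] has
   [v_j -> 1], and letting [n -> oo] in the equation above propagates the limits
   along the path from [i] to [j]: [w_a -> w_(parent a) / (lam_j - lam_a)]. *)

From mathcomp Require Import all_boot all_order all_algebra.
From mathcomp Require Import all_classical all_reals all_analysis.
From mathcomp Require Import ring lra.
Set Implicit Arguments. Unset Strict Implicit. Unset Printing Implicit Defensive.
Import Order.TTheory GRing.Theory Num.Theory.
Import numFieldNormedType.Exports.
Local Open Scope ring_scope.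
Local Open Scope classical_set_scope.

Section TreePaths.
Variables (T : finType) (e : rel T).

Lemma is_gpath_nil (i j : T) : is_gpath e i j [::] = (i == j).
Proof. by rewrite /is_gpath /= andbT. Qed.

Lemma is_gpath_cons (a j x : T) (p : seq T) :
  is_gpath e a j (x :: p) = [&& e a x, a \notin x :: p & is_gpath e x j p].
Proof.
rewrite /is_gpath /=.
by case: (e a x); case: (a \in x :: p); case: (path e x p); case: (last x p == j).
Qed.

Lemma is_gpath_loop (j : T) (p : seq T) : is_gpath e j j p -> p = [::].
Proof.
case: p => [//|x p] /and3P [_ /eqP /= Hl /andP [Hj _]].
by move: (mem_last x p); rewrite Hl (negbTE Hj).
Qed.

Lemma mem_gpath_end (i j x : T) (p : seq T) : is_gpath e i j (x :: p) -> j \in x :: p.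
Proof. by case/and3P => _ /eqP /= <- _; exact: mem_last. Qed.

Lemma gpath_size_lt (i j : T) (p : seq T) : is_gpath e i j p -> (size p < #|T|)%N.
Proof. by case/and3P => _ _ /card_uniqP /= <-; exact: max_card. Qed.

Lemma connected_gpath (i j : T) : connected_graph e -> exists p, is_gpath e i j p.
Proof.
move=> /(_ i j) /connectP [p pp ->].
case: (shortenP pp) => p' pp' up' _.
by exists p'; rewrite /is_gpath pp' up' eqxx.
Qed.

Hypotheses (e_sym : forall x y, e x y = e y x) (e_acyclic : acyclic_graph e).

(* Two paths from [a] leaving along different edges close up, at the first
   vertex [z] of the second path lying on the first, into a cycle of length >= 3. *)
Lemma gpath_first_step (a j x y : T) (p q : seq T) :
  is_gpath e a j (x :: p) -> is_gpath e a j (y :: q) -> x = y.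
Proof.
move=> Hp Hq; apply/eqP/negPn/negP => nxy.
have [z [s2 [r2 [EY zX ns2]]]] : exists z s2 r2,
    [/\ y :: q = rcons s2 z ++ r2, z \in x :: p & ~~ has (mem (x :: p)) s2].
  have : has (mem (x :: p)) (y :: q).
    by apply/hasP; exists j; [exact: mem_gpath_end Hq | exact: mem_gpath_end Hp].
  by case/split_find => z s2 r2 zX ns2; exists z, s2, r2.
have [s1 [r1 EX]] : exists s1 r1, x :: p = s1 ++ z :: r1.
  by case/splitPr: zX => s1 r1; exists s1, r1.
move: Hp Hq; rewrite EX EY -cats1 -catA /= /is_gpath => /and3P [+ _ uX] /and3P [+ _ uY].
rewrite EX in ns2.
rewrite cat_path => /andP [ps1 /= /andP [ez _]].
rewrite cat_path => /andP [ps2 /= /andP [ez2 _]].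
move: uX uY; rewrite !cons_uniq !mem_cat !inE !negb_or !cat_uniq /=.
move=> /and5P [/and3P [as1 az _] us1 /norP [zs1 _] _ _].
move=> /and5P [/and3P [as2 _ _] us2 /norP [zs2 _] _ _].
have ds : forall u, u \in s2 -> u \notin s1.
  move=> u us; have := hasPn ns2 u us; by rewrite /= mem_cat negb_or => /andP [].
suff : cycle e (a :: s1 ++ z :: rev s2).
  apply/negP/e_acyclic.
  - rewrite /= size_cat /= size_rev.
    case: s1 EX {ps1 ez as1 zs1 us1 ds ns2} => [|u s1] EX; last by rewrite /= addSn addnS !ltnS.
    case: s2 EY {ps2 ez2 as2 zs2 us2} => [|u s2] EY; last by rewrite /= add0n.
    by case: EX EY nxy => -> _ [-> _]; rewrite eqxx.
  - rewrite cons_uniq mem_cat inE mem_rev !negb_or as1 az as2 /=.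
    rewrite cat_uniq us1 /= mem_rev zs2 rev_uniq us2 /= andbT (negPf zs1) /=.
    by apply/hasPn => u; rewrite mem_rev; exact: ds.
rewrite /= rcons_cat /= cat_path ps1 /= ez /= -rev_cons.
have := rev_path e a (rcons s2 z); rewrite last_rcons belast_rcons => ->.
rewrite (@eq_path _ _ e); first by rewrite rcons_path ps2 ez2.
by move=> u v /=; rewrite e_sym.
Qed.

Lemma gpath_unique (a j : T) (p q : seq T) :
  is_gpath e a j p -> is_gpath e a j q -> p = q.
Proof.
elim: p q a => [|x p IHp] [|y q] a //.
- by move=> /and3P [_ /eqP /= <- _] /is_gpath_loop.
- by move=> Hp /and3P [_ /eqP /= Haj _]; move: Hp; rewrite -Haj => /is_gpath_loop.
move=> Hp Hq; have exy := gpath_first_step Hp Hq; subst y.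
rewrite is_gpath_cons in Hp; rewrite is_gpath_cons in Hq.
by case/and3P: Hp Hq => _ _ Hp /and3P [_ _ Hq]; rewrite (IHp _ _ Hp Hq).
Qed.

Variables (j : T) (P : T -> seq T).
Hypothesis (P_gpath : forall k, is_gpath e k j (P k)).

Lemma gpath_to_root_cons (a b : T) : e a b -> a \notin b :: P b -> P a = b :: P b.
Proof.
by move=> eab nab; apply: (gpath_unique (P_gpath a)); rewrite is_gpath_cons eab nab P_gpath.
Qed.

Hypothesis (e_irrefl : forall x, ~~ e x x).

Lemma edge_parentP (a b : T) : e a b -> P a = b :: P b \/ P b = a :: P a.
Proof.
move=> eab; case: (boolP (a \in b :: P b)) => Hab; last by left; exact: gpath_to_root_cons.
right; apply: gpath_to_root_cons; first by rewrite e_sym.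
have nab : a != b by apply: contraTneq eab => ->.
have [s [r Eb]] : exists s r, P b = s ++ a :: r.
  by move: Hab; rewrite inE (negPf nab) => /splitPr [s r]; exists s, r.
have := P_gpath b; rewrite /is_gpath Eb => /and3P [pb lb ub].
have Ha : is_gpath e a j r.
  move: pb ub; rewrite cat_path /= last_cat /= in lb *.
  by rewrite /is_gpath lb cons_uniq cat_uniq => /and3P [_ _ ->] /andP [_ /and3P [_ _]].
rewrite (gpath_unique (P_gpath a) Ha).
by move: ub; rewrite cons_uniq mem_cat negb_or => /andP [/andP [_ ->] _].
Qed.

End TreePaths.

Lemma path_weight_cons (T : finType) (f : T -> T -> nat) (a b : T) (q : seq T) :
  path_weight f a (b :: q) = (f a b + path_weight f b q)%N.
Proof. by rewrite /path_weight /= big_cons. Qed.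

Lemma path_coef_cons (R : realType) (m : nat) (lam : 'I_m -> R) (a j x : 'I_m) q :
  path_coef lam a j (x :: q) = (lam j - lam a)^-1 * path_coef lam x j q.
Proof. by rewrite /path_coef /= big_cons. Qed.

Lemma ler_sum_card (R : numDomainType) (I : finType) (P : pred I) (F : I -> R) (c : R) :
  0 <= c -> (forall k, P k -> F k <= c) -> \sum_(k | P k) F k <= #|I|%:R * c.
Proof.
move=> c_ge0 leFc; apply: le_trans (ler_sum _ leFc) _.
by rewrite sumr_const -[c *+ _]mulr_natl ler_wpM2r // ler_nat max_card.
Qed.

Lemma exists_pos_lb (R : realDomainType) (I : finType) (P : pred I) (F : I -> R) :
  (forall i, P i -> 0 < F i) -> exists2 d, 0 < d & forall i, P i -> d <= F i.
Proof.
move=> F_gt0; exists (\big[Num.min/1]_(i | P i) F i).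
  by apply: (big_ind (fun x => 0 < x)) => // x y x0 y0; rewrite lt_min x0 y0.
by move=> i Pi; rewrite (bigD1 i) //= ge_min lexx.
Qed.

Section OrthogonalMatrix.
Variables (R : realFieldType) (m : nat) (U : 'M[R]_m).
Hypothesis U_orth : U^T *m U = 1%:M.

Lemma orthomx_col_norm (j : 'I_m) : \sum_k U k j ^+ 2 = 1.
Proof.
have := congr1 (fun M : 'M[R]_m => M j j) U_orth.
by rewrite !mxE eqxx mulr1n => <-; apply: eq_bigr => k _; rewrite mxE expr2.
Qed.

Lemma orthomx_entry_le1 (k j : 'I_m) : `|U k j| <= 1.
Proof.
suff : `|U k j| ^+ 2 <= 1 by rewrite expr_le1.
rewrite real_normK ?num_real // -(orthomx_col_norm j) (bigD1 k) //= lerDl.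
by apply: sumr_ge0 => l _; exact: sqr_ge0.
Qed.

Lemma orthomx_eigvec (A : 'M[R]_m) (lam : 'I_m -> R) (a j : 'I_m) :
  U^T *m A *m U = diag_mx (\row_k lam k) -> \sum_k A a k * U k j = lam j * U a j.
Proof.
move=> U_diag; have U_orth' : U *m U^T = 1%:M by exact: mulmx1C.
have AU : A *m U = U *m diag_mx (\row_k lam k) by rewrite -U_diag !mulmxA U_orth' mul1mx.
by have := congr1 (fun M : 'M[R]_m => M a j) AU; rewrite mul_mx_diag !mxE mulrC => <-.
Qed.

End OrthogonalMatrix.

Lemma cvg0_norm_le_scale (R : realType) (u t : nat -> R) (c : R) :
  (\forall n \near \oo, `|u n| <= c * t n) -> t @ \oo --> 0 -> u @ \oo --> 0.
Proof.
move=> le_u t0; have ct0 : (c * t n) @[n --> \oo] --> 0.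
  by rewrite -(mulr0 c); exact: cvgMl_tmp.
apply: (@squeeze_cvgr _ _ _ _ (fun n => - (c * t n)) (fun n => c * t n)) => //.
  by near=> n; rewrite -ler_norml; near: n.
by rewrite -oppr0; exact: cvgN.
Unshelve. all: by end_near.
Qed.

Lemma neighbour_term_le (R : realFieldType) (K t M x tau : R) (da dk : nat) (par : bool) :
  1 <= K -> 0 <= t -> 0 <= M -> `|tau| <= t -> `|x| <= M * K ^+ dk ->
  (if par then da = dk.+1 else dk = da.+1) ->
  `|if par then x else tau * x| <= (K^-1 + t * K) * M * K ^+ da.
Proof.
move=> K_ge1 t_ge0 M_ge0 tau_le x_le.
have K_gt0 : 0 < K by exact: lt_le_trans K_ge1.
have KV_ge0 : 0 <= K^-1 by rewrite invr_ge0 ltW.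
case: par => Ed /=; [rewrite Ed exprS | rewrite Ed exprS in x_le].
- have X_ge0 : 0 <= K ^+ dk by rewrite exprn_ge0 // ltW.
  have : 0 <= t * K * M * (K * K ^+ dk) by rewrite !mulr_ge0 // ltW.
  have : K^-1 * M * (K * K ^+ dk) = M * K ^+ dk by rewrite mulrAC mulKf ?gt_eqF // mulrC.
  nra.
- have X_ge0 : 0 <= K ^+ da by rewrite exprn_ge0 // ltW.
  have : 0 <= K^-1 * M * K ^+ da by rewrite !mulr_ge0.
  have : `|x| <= M * (K * K ^+ da) := x_le.
  rewrite normrM; have := normr_ge0 x; have := normr_ge0 tau.
  nra.
Qed.

(* Discrete maximum principle for [u k = |w k| / K ^ d k]: at a maximiser
   [a != j] the equation at [a] would force [delta * u a <= c * u a] with [c < delta]. *)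
Lemma rescaled_max_principle (R : realFieldType) (I : finType) (nb par : rel I)
    (d : I -> nat) (j : I) (w D : I -> R) (tau : I -> I -> R) (delta t K : R) :
  1 <= K -> 0 <= t -> #|I|%:R * (K^-1 + t * K) < delta ->
  (forall a k, nb a k -> if par a k then d a = (d k).+1 else d k = (d a).+1) ->
  (forall a k, nb a k -> `|tau a k| <= t) ->
  (forall a, a != j -> delta <= `|D a|) ->
  (forall a, a != j ->
     D a * w a = \sum_(k | nb a k) (if par a k then w k else tau a k * w k)) ->
  `|w j| <= 1 -> d j = 0%N -> forall k, `|w k| <= K ^+ d k.
Proof.
move=> K_ge1 t_ge0 c_lt d_step tau_le D_ge w_eq wj_le dj.
have K_gt0 : 0 < K by exact: lt_le_trans K_ge1.
have Kd_gt0 k : 0 < K ^+ d k by exact: exprn_gt0.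
pose u k := `|w k| / K ^+ d k.
have [a _ u_max] := @arg_maxP _ _ I j predT u isT.
set M := u a in u_max.
have M_ge0 : 0 <= M by rewrite divr_ge0 // ltW.
have w_le k : `|w k| <= M * K ^+ d k by rewrite -ler_pdivrMr //; exact: u_max.
suff M_le1 : M <= 1.
  by move=> k; apply: le_trans (w_le k) _; rewrite ler_piMl // ltW.
case: (eqVneq a j) => [a_j | naj]; first by rewrite /M /u a_j dj expr0 divr1.
set c := #|I|%:R * (K^-1 + t * K) in c_lt.
have : delta * (M * K ^+ d a) <= c * (M * K ^+ d a).
  have Ma : M * K ^+ d a = `|w a| by rewrite /M /u divfK ?gt_eqF.
  rewrite {1}Ma (le_trans (ler_wpM2r (normr_ge0 _) (D_ge a naj))) //.
  rewrite -normrM w_eq //; apply: le_trans (ler_norm_sum _ _ _) _.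
  rewrite /c -mulrA [_ * (M * _)]mulrA; apply: ler_sum_card => [|k nb_ak].
    have cK_ge0 : 0 <= K^-1 + t * K by rewrite addr_ge0 ?invr_ge0 ?mulr_ge0 // ltW.
    by apply: mulr_ge0; [exact: mulr_ge0 | exact: ltW].
  exact: neighbour_term_le K_ge1 t_ge0 M_ge0 (tau_le _ _ nb_ak) (w_le k) (d_step _ _ nb_ak).
have Y_ge0 : 0 <= M * K ^+ d a by rewrite mulr_ge0 // ltW.
move=> le_Y; have : M * K ^+ d a <= 0 by move: (M * K ^+ d a) Y_ge0 le_Y => Y; nra.
by rewrite pmulr_lle0 // => /le_trans; apply.
Qed.

Section TreeEigenvector.
Variables (R : realType) (m : nat) (e : rel 'I_m) (f : 'I_m -> 'I_m -> nat).
Hypotheses (e_sym : forall a b, e a b = e b a) (e_irrefl : forall a, ~~ e a a)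
  (e_conn : connected_graph e) (e_acyclic : acyclic_graph e)
  (f_sym : forall a b, f a b = f b a) (f_gt0 : forall a b, e a b -> (0 < f a b)%N).
Variables (lam : 'I_m -> R) (t : nat -> R) (A U : nat -> 'M[R]_m) (j : 'I_m).
Hypotheses (lam_inj : injective lam)
  (t_gt0 : forall n, 0 < t n) (t_cvg0 : t @ \oo --> 0)
  (A_MfG : forall n, in_MfG e f (t n) (A n))
  (A_diag_cvg : forall a, A n a a @[n --> \oo] --> lam a)
  (U_orth : forall n, (U n)^T *m U n = 1%:M)
  (U_eig : forall n, (U n)^T *m A n *m U n = diag_mx (\row_k lam k))
  (U_jj_ge0 : forall n, 0 <= U n j j).

Local Notation v n k := (U n k j).

Let P k := xchoose (connected_gpath k j e_conn).
Let P_gpath k : is_gpath e k j (P k) := xchooseP (connected_gpath k j e_conn).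
Let P_unique k q : is_gpath e k j q -> P k = q := gpath_unique e_sym e_acyclic (P_gpath k).
Let s k := path_weight f k (P k).
Let w n k := v n k / t n ^+ s k.

Let s_root : s j = 0%N.
Proof. by rewrite /s (is_gpath_loop (P_gpath j)) /path_weight big_nil. Qed.

Let s_gt0 k : k != j -> (0 < s k)%N.
Proof.
move=> kj; have := P_gpath k; rewrite /s.
case: (P k) => [|b q]; first by rewrite is_gpath_nil (negPf kj).
by rewrite is_gpath_cons path_weight_cons addn_gt0 => /andP [/f_gt0 ->].
Qed.

Let t_small eps : 0 < eps -> \forall n \near \oo, t n <= eps.
Proof.
move=> eps_gt0; near=> n; apply: le_trans (ler_norm _) _; near: n.
exact: cvgr0_norm_le _ t_cvg0 _ eps_gt0.
Unshelve. all: by end_near.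
Qed.

Let t_pow_le n q : (0 < q)%N -> t n <= 1 -> t n ^+ q <= t n.
Proof.
by case: q => // q _ t_le1; rewrite exprS ler_piMr ?exprn_ile1 // ltW.
Qed.

Lemma tree_eigen_eq n a :
  (lam j - A n a a) * v n a = \sum_(k | e a k) t n ^+ f a k * v n k.
Proof.
have := orthomx_eigvec (U_orth n) a j (U_eig n).
rewrite (bigD1 a) //= => E.
have -> : \sum_(k | e a k) t n ^+ f a k * v n k = \sum_(k | k != a) A n a k * v n k.
  rewrite big_mkcond [RHS]big_mkcond; apply: eq_bigr => k _.
  case: (eqVneq k a) => [->|nka]; first by rewrite (negPf (e_irrefl a)).
  by have [_ ->] := A_MfG n; [case: (e a k); rewrite ?mul0r | rewrite eq_sym].
by rewrite mulrBl -E; ring.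
Qed.

Lemma rescaled_eigen_eq n a : (lam j - A n a a) * w n a =
  \sum_(k | e a k) (if P a == k :: P k then w n k else t n ^+ (2 * f a k) * w n k).
Proof.
have tn0 k : t n ^+ s k != 0 by rewrite expf_neq0 // gt_eqF.
have vw k : v n k = t n ^+ s k * w n k by rewrite /w mulrC divfK.
apply: (mulfI (tn0 a)); rewrite mulrCA -vw tree_eigen_eq mulr_sumr.
apply: eq_bigr => k ek; case: ifP => [/eqP Pa | Pa].
  by rewrite vw /s Pa path_weight_cons exprD mulrA.
case: (edge_parentP e_sym e_acyclic P_gpath e_irrefl ek) => [Pa' | Pk].
  by rewrite Pa' eqxx in Pa.
by rewrite vw /s Pk path_weight_cons f_sym mul2n -addnn !exprD; ring.
Qed.

Lemma diag_gap : exists2 delta, 0 < delta &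
  \forall n \near \oo, forall a, a != j -> delta <= `|lam j - A n a a|.
Proof.
have [delta delta_gt0 delta_le] : exists2 delta, 0 < delta &
    forall a, a != j -> delta <= `|lam j - lam a| / 2.
  apply: exists_pos_lb => a aj.
  by rewrite divr_gt0 // normr_gt0 subr_eq0 eq_sym (inj_eq lam_inj).
exists delta => //; apply: filter_forall => a.
case: (eqVneq a j) => [-> | aj]; first by near=> n => /eqP.
near=> n => _.
have : `|lam a - A n a a| <= delta.
  by near: n; exact: cvgr_dist_le _ _ (@A_diag_cvg a) _ delta_gt0.
have := delta_le a aj; have := ler_distD (A n a a) (lam j) (lam a).
rewrite [`|lam a - _|]distrC; lra.
Unshelve. all: by end_near.
Qed.

Lemma rescaled_bounded :
  exists2 C, 0 <= C & \forall n \near \oo, forall k, `|w n k| <= C.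
Proof.
have [delta delta_gt0 gap] := diag_gap.
pose K : R := 1 + 2 * m%:R / delta.
have K_ge1 : 1 <= K by rewrite lerDl divr_ge0 // ?mulr_ge0 // ltW.
have K_gt0 : 0 < K by exact: lt_le_trans K_ge1.
have K2_gt0 : 0 < (K ^+ 2)^-1 by rewrite invr_gt0 exprn_gt0.
exists (K ^+ m); first by rewrite exprn_ge0 // ltW.
near=> n => k.
have t_le1 : t n <= 1 by near: n; exact: t_small.
have t_leK : t n <= (K ^+ 2)^-1 by near: n; exact: t_small.
rewrite -[m in K ^+ m]card_ord.
apply: le_trans _ (ler_weXn2l K_ge1 (ltnW (gpath_size_lt (P_gpath k)))).
apply: (@rescaled_max_principle _ _ e (fun a k => P a == k :: P k) (fun k => size (P k))
  j (w n) (fun a => lam j - A n a a) (fun a k => t n ^+ (2 * f a k)) delta (t n) K).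
- exact: K_ge1.
- exact: ltW.
- rewrite card_ord -(ltr_pM2r K_gt0).
  have -> : m%:R * (K^-1 + t n * K) * K = m%:R + m%:R * (t n * K ^+ 2).
    by field; rewrite gt_eqF.
  have -> : delta * K = delta + 2 * m%:R by rewrite /K; field; rewrite gt_eqF.
  have : t n * K ^+ 2 <= 1 by rewrite -ler_pdivlMr ?exprn_gt0 // div1r.
  have := ler0n R m; nra.
- move=> a b eab; case: ifP => [/eqP -> // | Pa].
  case: (edge_parentP e_sym e_acyclic P_gpath e_irrefl eab) => [Pa' | -> //].
  by rewrite Pa' eqxx in Pa.
- move=> a b eab; rewrite ger0_norm ?exprn_ge0 ?(ltW (t_gt0 n)) //.
  by apply: t_pow_le; rewrite // muln_gt0 f_gt0.
- by near: n.
- by move=> a _; exact: rescaled_eigen_eq.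
- by rewrite /w s_root expr0 divr1 orthomx_entry_le1.
- by rewrite (is_gpath_loop (P_gpath j)).
Unshelve. all: by end_near.
Qed.

Lemma eigvec_offroot_le :
  exists2 C, 0 <= C & \forall n \near \oo, forall k, k != j -> `|v n k| <= C * t n.
Proof.
have [C C_ge0 w_le] := rescaled_bounded.
exists C => //; near=> n => k kj.
have t_le1 : t n <= 1 by near: n; exact: t_small.
have wk_le : `|w n k| <= C by have := near w_le n; apply.
have ts_ge0 : 0 <= t n ^+ s k by rewrite exprn_ge0 // ltW.
rewrite -[v n k](@divfK _ (t n ^+ s k)) ?expf_neq0 ?gt_eqF // normrM (ger0_norm ts_ge0).
by apply: ler_pM => //; apply: t_pow_le => //; exact: s_gt0.
Unshelve. all: by end_near.
Qed.

Lemma eigvec_root_cvg : v n j @[n --> \oo] --> (1 : R).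
Proof.
have [C C_ge0 v_le] := eigvec_offroot_le.
apply/subr_cvg0/(@cvg0_norm_le_scale _ _ t (m%:R * C)) => //.
near=> n.
have vj_ge0 := U_jj_ge0 n; have vj_le1 := orthomx_entry_le1 (U_orth n) j j.
have vj_le : `|v n j - 1| <= 1 - v n j ^+ 2.
  rewrite distrC ger0_norm ?subr_ge0; last by apply: le_trans (ler_norm _) _.
  move: vj_le1; rewrite ger0_norm // => vj_le1; nra.
apply: (le_trans vj_le).
have -> : 1 - v n j ^+ 2 = \sum_(k | k != j) v n k ^+ 2.
  by rewrite -(orthomx_col_norm (U_orth n) j) (bigD1 j) //= addrC addrK.
have -> : m%:R * C * t n = #|'I_m|%:R * (C * t n) by rewrite card_ord mulrA.
apply: ler_sum_card => [|k kj]; first by rewrite mulr_ge0 // ltW.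
have vk_le1 := orthomx_entry_le1 (U_orth n) k j.
have vk_le : `|v n k| <= C * t n by have := near v_le n; apply.
rewrite -real_normK ?num_real // expr2; apply: le_trans vk_le.
by rewrite ler_piMr.
Unshelve. all: by end_near.
Qed.

Lemma rescaled_children_cvg0 a (Q : pred 'I_m) :
  (\sum_(k | e a k && Q k) t n ^+ (2 * f a k) * w n k) @[n --> \oo] --> 0.
Proof.
have [C C_ge0 w_le] := rescaled_bounded.
apply: (@cvg0_norm_le_scale _ _ t (m%:R * C)) => //; near=> n.
have t_le1 : t n <= 1 by near: n; exact: t_small.
have wk_le k : `|w n k| <= C by have := near w_le n; apply.
apply: le_trans (ler_norm_sum _ _ _) _.
rewrite -mulrA -[m in m%:R * _]card_ord; apply: ler_sum_card => [|k /andP [eak _]].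
  by rewrite mulr_ge0 // ltW.
have tf_ge0 : 0 <= t n ^+ (2 * f a k) by rewrite exprn_ge0 // ltW.
rewrite normrM (ger0_norm tf_ge0) mulrC ler_pM //.
by apply: t_pow_le; rewrite // muln_gt0 f_gt0.
Unshelve. all: by end_near.
Qed.

Lemma eigvec_entry_cvg a q : is_gpath e a j q ->
  (U n a j / t n ^+ path_weight f a q) @[n --> \oo] --> path_coef lam a j q.
Proof.
elim: q a => [|x q IHq] a Haq.
  move: Haq; rewrite is_gpath_nil => /eqP ->.
  rewrite /path_coef /path_weight /= !big_nil.
  by under eq_fun do rewrite expr0 divr1; exact: eigvec_root_cvg.
have [delta delta_gt0 gap] := diag_gap.
have aj : a != j by apply: contraTneq Haq => ->; apply/negP => /is_gpath_loop.
have := Haq; rewrite is_gpath_cons => /and3P [eax _ Hxq].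
have w_x : w n x @[n --> \oo] --> path_coef lam x j q.
  by rewrite /w /s (P_unique Hxq); exact: IHq.
have -> : path_weight f a (x :: q) = s a by rewrite /s (P_unique Haq).
pose Rn n := \sum_(k | e a k && (k != x)) t n ^+ (2 * f a k) * w n k.
have eq_a n : (lam j - A n a a) * w n a = w n x + Rn n.
  rewrite rescaled_eigen_eq (bigD1 x) //= (P_unique Haq) (P_unique Hxq) eqxx.
  congr (_ + _); apply: eq_bigr => k /andP [_ kx].
  by case: ifP => // /eqP [xk _]; rewrite xk eqxx in kx.
have Rn_cvg0 : Rn n @[n --> \oo] --> 0 := rescaled_children_cvg0 a (predC1 x).
have D_cvg : (lam j - A n a a) @[n --> \oo] --> lam j - lam a.
  exact: cvgB (cvg_cst _) (@A_diag_cvg a).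
have D_neq0 : lam j - lam a != 0 by rewrite subr_eq0 eq_sym (inj_eq lam_inj).
rewrite path_coef_cons mulrC -[path_coef lam x j q]addr0.
apply: cvg_trans _ (cvgM (cvgD w_x Rn_cvg0) (cvgV D_neq0 D_cvg)).
apply: near_eq_cvg; near=> n.
have D_n : delta <= `|lam j - A n a a| by have := near gap n; apply.
have D_n0 : lam j - A n a a != 0 by rewrite -normr_gt0 (lt_le_trans delta_gt0).
change ((w n x + Rn n) / (lam j - A n a a) = w n a).
by rewrite -eq_a mulrC mulKf.
Unshelve. all: by end_near.
Qed.

End TreeEigenvector.

Theorem lemma2p3 (R : realType) (m : nat) (lam : 'I_m -> R)
  (e : rel 'I_m) (g : 'I_m -> 'I_m -> nat) (N0 : nat)
  (t : nat -> R) (A U : nat -> 'M[R]_m) :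
  (forall i j : 'I_m, (i < j)%N -> lam i < lam j) ->
  is_tree e ->
  (forall i j, g i j = g j i) ->
  (max_on_edges e g * diam e < N0)%N ->
  (forall n, 0 < t n) ->
  t @ \oo --> 0 ->
  (forall n, in_MfG e (fun i j => N0 + g i j)%N (t n) (A n)) ->
  (forall n, in_E lam (A n)) ->
  (forall i j, (A n i j) @[n --> \oo] --> diag_mx (\row_k lam k) i j) ->
  (forall n, (U n)^T *m U n = 1%:M) ->
  (forall n (i : 'I_m), 0 <= U n i i) ->
  (forall n, (U n)^T *m A n *m U n = diag_mx (\row_k lam k)) ->
  forall (i j : 'I_m) (p : seq 'I_m), is_gpath e i j p ->
    (U n i j / t n ^+ path_weight (fun a b => N0 + g a b)%N i p)
      @[n --> \oo] --> path_coef lam i j p.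
Proof.
move=> lam_lt [[e_sym e_irrefl] [e_conn e_acyclic]] g_sym N0_gt t_gt0 t_cvg0 A_MfG _.
move=> A_cvg U_orth U_ge0 U_eig i j p ij_path.
have lam_inj : injective lam.
  move=> a b lam_ab; apply: val_inj.
  by case: (ltngtP a b) => // /lam_lt; rewrite lam_ab ltxx.
have f_gt0 a b : e a b -> (0 < N0 + g a b)%N.
  by move=> _; rewrite addn_gt0 (leq_ltn_trans (leq0n _) N0_gt).
have A_diag_cvg a : A n a a @[n --> \oo] --> lam a.
  by have := A_cvg a a; rewrite !mxE eqxx mulr1n.
apply: eigvec_entry_cvg ij_path => // a b.
by rewrite g_sym.
Qed.
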